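(* Let $H:\mathbb{C}^{n_1\times\dots\times n_d}\to\mathbb{C}^{n_1\times\dots\times n_d}$ be linear and self-adjoint ($\langle H[Y],Z\rangle=\langle Y,H[Z]\rangle$ for all $Y,Z$), and let $\mathrm{E}(Y)=\langle Y,H[Y]\rangle$. Run the rank-augmenting TTN integrator (described in the context) on the maximal tree $\bar\tau$ with an orthonormal starting TTN $Y_{\bar\tau}^0$ of full tree rank and the function $F(t,Y)=-\mathrm{i}\,H[Y]$ (the tensor Schrödinger equation $\mathrm{i}\dot A=H[A]$), over a step $t_0<t_1$ of arbitrary step size $h=t_1-t_0$. Then the rank-augmented result $\widehat Y_{\bar\tau}^1$ satisfies $\mathrm{E}(\widehat Y_{\bar\tau}^1)=\mathrm{E}(Y_{\bar\tau}^0)$.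
   Context: Tensor notation: for a tensor with modes indexed $0,1,\dots,m$, $\mathrm{mat}_i$ is the mode-$i$ matricization (rows indexed by the $i$th index) and $\mathrm{ten}_i$ its inverse; $A\times_i\mathbf{B}$ is the mode-$i$ product, $\mathrm{mat}_i(A\times_i\mathbf{B})=\mathbf{B}\,\mathrm{mat}_i(A)$; $\times_{i=1}^m$ denotes successive products in modes $1,\dots,m$; ${}^*$ is conjugate transpose; $\|\cdot\|$ and $\langle X,Y\rangle=\sum \overline{x}\,y$ are the Euclidean norm and inner product of the vectors of entries. Trees: given a finite leaf set $\mathcal{L}=\{1,\dots,d\}$, each leaf $l$ is a tree with leaf set $\{l\}$; if $\tau_1,\dots,\tau_m$ ($m\ge2$) are trees with pairwise disjoint leaf sets, the ordered tuple $\tau=(\tau_1,\dots,\tau_m)$ is a tree whose leaf set is their union; the $\tau_i$ are its direct subtrees, and subtrees are defined recursively ($\sigma\le\tau$, $\sigma<\tau$ if also $\sigma\ne\tau$). Fix a tree $\bar\tau$ with leaf set $\mathcal{L}$. Tree tensor networks (TTN): given dimensions $n_l$ and ranks $r_\sigma$ ($\sigma\le\bar\tau$, $r_{\bar\tau}=1$), basis matrices $\mathbf{U}_l\in\mathbb{C}^{n_l\times r_l}$ at leaves and connection tensors $C_\tau\in\mathbb{C}^{r_\tau\times r_{\tau_1}\times\dots\times r_{\tau_m}}$ of full multilinear rank at non-leaf subtrees $\tau=(\tau_1,\dots,\tau_m)$, set $X_l=\mathbf{U}_l^\top$, $X_\tau=C_\tau\times_0\mathbf{I}_{r_\tau}\times_{i=1}^m\mathbf{U}_{\tau_i}\in\mathcal{V}_\tau:=\mathbb{C}^{r_\tau\times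 n_{\tau_1}\times\dots\times n_{\tau_m}}$ with $n_\tau=\prod_i n_{\tau_i}$, and $\mathbf{U}_\tau=\mathrm{mat}_0(X_\tau)^\top\in\mathbb{C}^{n_\tau\times r_\tau}$; for a leaf, $\mathcal{V}_l:=\mathbb{C}^{r_l\times n_l}$. The TTN is orthonormal if every $\mathbf{U}_\sigma$, $\sigma<\bar\tau$, has orthonormal columns. Full tree rank means all connection tensors have full multilinear rank. $\mathcal{V}_{\bar\tau}$ is identified with $\mathbb{C}^{n_1\times\dots\times n_d}$. Reduced operators and starting values: for a non-leaf $\tau=(\tau_1,\dots,\tau_m)$, a function $F_\tau:[t_0,t_1]\times\mathcal{V}_\tau\to\mathcal{V}_\tau$ and a starting TTN $Y_\tau^0=C_\tau^0\times_0\mathbf{I}_{r_\tau}\times_{i=1}^m\mathbf{U}_{\tau_i}^0$ with $\mathbf{U}_{\tau_i}^0=\mathrm{mat}_0(X_{\tau_i}^0)^\top$, compute QR decompositions $\mathrm{mat}_i(C_\tau^0)^\top=\mathbf{Q}_{\tau_i}^0\mathbf{S}_{\tau_i}^{0,\top}$, let $\mathbf{V}_{\tau_i}^0=\mathrm{mat}_i\big(\mathrm{ten}_i(\mathbf{Q}_{\tau_i}^{0,\top})\times_0\mathbf{I}_{r_\tau}\times_{j\ne i}\mathbf{U}_{\tau_j}^0\big)^\top$, prolongation $\pi_{\tau,i}(Y)=\mathrm{ten}_i\big((\mathbf{V}_{\tau_i}^0\mathrm{mat}_0(Y))^\top\big)$ for $Y\in\mathcal{V}_{\tau_i}$, restriction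 $\pi_{\tau,i}^\dagger(Z)=\mathrm{ten}_0\big((\mathrm{mat}_i(Z)\mathbf{V}_{\tau_i}^0)^\top\big)$ for $Z\in\mathcal{V}_\tau$, and set $F_{\tau_i}(t,Y)=\pi_{\tau,i}^\dagger(F_\tau(t,\pi_{\tau,i}(Y)))$ and $Y_{\tau_i}^0=X_{\tau_i}^0\times_0\mathbf{S}_{\tau_i}^{0,\top}$. Rank-augmenting TTN integrator on $(\tau,Y_\tau^0,F_\tau,t_0,t_1)$, $\tau$ non-leaf: (1) for each $i$: if $\tau_i=l$ is a leaf, solve $\dot Y_l=F_l(t,Y_l)$, $Y_l(t_0)=Y_l^0$, let $\widehat{\mathbf{U}}_l$ have orthonormal columns spanning the range of $(Y_l(t_1)^\top,\mathbf{U}_l^0)$, and $\widehat{\mathbf{M}}_l=\widehat{\mathbf{U}}_l^*\mathbf{U}_l^0$; otherwise call the integrator recursively on $(\tau_i,Y_{\tau_i}^0,F_{\tau_i},t_0,t_1)$, obtaining $\widehat Y_{\tau_i}^1$ (with root connection tensor $\widehat C_{\tau_i}^1$) and $\widehat C_{\tau_i}^0$, let $\widehat{\mathbf{Q}}_{\tau_i}$ have orthonormal columns spanning the range of $(\mathrm{mat}_0(\widehat C_{\tau_i}^1)^\top,\mathrm{mat}_0(\widehat C_{\tau_i}^0)^\top)$, let $\widehat X_{\tau_i}$ be $\widehat Y_{\tau_i}^1$ with root connection tensor replaced by $\mathrm{ten}_0(\widehat{\mathbf{Q}}_{\tau_i}^\top)$, and set $\widehat{\mathbf{U}}_{\tau_i}=\mathrm{mat}_0(\widehat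 X_{\tau_i})^\top$, $\widehat{\mathbf{M}}_{\tau_i}=\widehat{\mathbf{U}}_{\tau_i}^*\mathbf{U}_{\tau_i}^0$. (2) Set $\widehat C_\tau^0=C_\tau^0\times_{i=1}^m\widehat{\mathbf{M}}_{\tau_i}$, solve $\dot{\widehat C}_\tau(t)=F_\tau\big(t,\widehat C_\tau(t)\times_0\mathbf{I}_{r_\tau}\times_{i=1}^m\widehat{\mathbf{U}}_{\tau_i}\big)\times_{i=1}^m\widehat{\mathbf{U}}_{\tau_i}^*$, $\widehat C_\tau(t_0)=\widehat C_\tau^0$, set $\widehat C_\tau^1=\widehat C_\tau(t_1)$, and return $\widehat Y_\tau^1=\widehat C_\tau^1\times_0\mathbf{I}_{r_\tau}\times_{i=1}^m\widehat{\mathbf{U}}_{\tau_i}$ and $\widehat C_\tau^0$. At the top level, $F_{\bar\tau}=F$ and $Y_{\bar\tau}^0$ is the given starting TTN. All differential equations are assumed to be solved exactly. *)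

From HB Require Import structures.
From mathcomp Require Import all_boot all_order all_algebra.
From mathcomp Require Import complex.
From mathcomp Require Import all_classical all_reals topology normedtype derive.
Unset Printing Implicit Defensive.
Import Order.TTheory GRing.Theory Num.Theory.
Import numFieldNormedType.Exports.
Local Open Scope classical_set_scope.
Local Open Scope ring_scope.

Inductive tree : Type := Leaf of nat | Node of seq tree.
Definition tdef := Leaf 0.

Fixpoint leaves (t : tree) : seq nat :=
  match t with Leaf l => [:: l] | Node ts => flatten (map leaves ts) end.

Fixpoint arity_ok (t : tree) : bool :=
  match t with Leaf _ => true | Node ts => (1 < size ts)%N && all arity_ok ts end.

(* t is a tree (in the sense of the paper) with leaf set {1,...,d}:
   pairwise disjoint leaf sets of the direct subtrees (leaves uniq),
   and the leaf set is exactly {1,...,d}. *)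
Definition is_tree_on (d : nat) (t : tree) : Prop :=
  arity_ok t /\ uniq (leaves t) /\ perm_eq (leaves t) (iota 1 d).

Fixpoint dropS (ts : seq tree) (i : nat) : seq tree :=
  match ts with
  | [::] => [::]
  | t :: ts' => match i with 0%N => ts' | i'.+1 => t :: dropS ts' i' end
  end.

Section TTNdefs.
Variable R : realType.
Local Notation C := (complex R).
Variable n : nat -> nat.

Fixpoint PL (f : tree -> finType) (ts : seq tree) : finType :=
  match ts with [::] => unit | t :: ts' => (f t * PL f ts')%type end.

(* index set of subtree t : {1..n_t}, realised as the product of the
   index sets of its direct subtrees (n_tau = prod_i n_{tau_i}) *)
Fixpoint Idx (t : tree) : finType :=
  match t with Leaf l => 'I_(n l) | Node ts => PL Idx ts end.

Fixpoint HL (T : tree -> Type) (ts : seq tree) : Type :=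
  match ts with [::] => unit | t :: ts' => (T t * HL T ts')%type end.

Definition ordT (rk : tree -> nat) (t : tree) : finType := 'I_(rk t).

(* V_t = C^{r_t x n_{t_1} x ... x n_{t_m}}, stored in its mode-0 matricised
   form (rows: mode 0; columns: the product index set Idx t).  For a leaf,
   V_l = C^{r_l x n_l}. *)
Definition V (rk : tree -> nat) (t : tree) : Type := 'I_(rk t) -> Idx t -> C.

(* A TTN on the tree t with root rank r0 and ranks rk on proper subtrees:
   leaf:      the basis matrix U_l in C^{n_l x r0};
   non-leaf:  the connection tensor C_t in C^{r0 x r_{t_1} x ... x r_{t_m}}
              together with TTNs for the direct subtrees t_i (root rank r_{t_i}). *)
Fixpoint TTN (rk : tree -> nat) (r0 : nat) (t : tree) : Type :=
  match t with
  | Leaf l => 'I_(n l) -> 'I_r0 -> C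
  | Node ts => (('I_r0 -> PL (ordT rk) ts -> C) * HL (fun s => TTN rk (rk s) s) ts)%type
  end.

Definition ConnT (rk : tree -> nat) (r0 : nat) (t : tree) : Type :=
  match t with Leaf _ => unit | Node ts => 'I_r0 -> PL (ordT rk) ts -> C end.

(* multi-mode product  G x_1 M_1 ... x_m M_m  evaluated at x:
   sum_y G(y) prod_i M_i(x_i, y_i) *)
Fixpoint mcS (f g : tree -> finType) (ts : seq tree) :
  (forall i, f (nth tdef ts i) -> g (nth tdef ts i) -> C) -> (PL g ts -> C) -> PL f ts -> C :=
  match ts as ts0 return
    (forall i, f (nth tdef ts0 i) -> g (nth tdef ts0 i) -> C) -> (PL g ts0 -> C) -> PL f ts0 -> C with
  | [::] => fun M G x => G tt
  | t :: ts' => fun M G x =>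
      \sum_(y : g t) M 0%N x.1 y * mcS f g ts' (fun i => M i.+1) (fun ys => G (y, ys)) x.2
  end.

Fixpoint UmH (T : tree -> Type) (g : tree -> finType) (fl : forall s, T s -> g s -> Idx s -> C)
  (ts : seq tree) : HL T ts -> forall i, Idx (nth tdef ts i) -> g (nth tdef ts i) -> C :=
  match ts as ts0 return HL T ts0 -> forall i, Idx (nth tdef ts0 i) -> g (nth tdef ts0 i) -> C with
  | [::] => fun _ _ _ _ => 0
  | t :: ts' => fun h i =>
      match i as i0 return Idx (nth tdef (t :: ts') i0) -> g (nth tdef (t :: ts') i0) -> C with
      | 0%N => fun j k => fl t h.1 k j
      | i'.+1 => UmH T g fl ts' h.2 i'
      end
  end.

(* X_t = C_t x_0 I x_1 U_{t_1} ... x_m U_{t_m}  (for a leaf X_l = U_l^T),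
   as an element of C^{r0 x n_t} (= mat_0 X_t; U_t = (full X)^T). *)
Fixpoint full (rk : tree -> nat) (r0 : nat) (t : tree) : TTN rk r0 t -> 'I_r0 -> Idx t -> C :=
  match t as t0 return TTN rk r0 t0 -> 'I_r0 -> Idx t0 -> C with
  | Leaf l => fun U a j => U j a
  | Node ts => fun X a js =>
      mcS Idx (ordT rk) ts
        (UmH (fun s => TTN rk (rk s) s) (ordT rk) (fun s => full rk (rk s) s) ts X.2) (X.1 a) js
  end.

Definition Umat (rk : tree -> nat) (r0 : nat) (t : tree) (X : TTN rk r0 t) : Idx t -> 'I_r0 -> C :=
  fun j a => full rk r0 t X a j.

Fixpoint getH (T : tree -> Type) (dflt : T tdef) (ts : seq tree) : HL T ts -> forall i, T (nth tdef ts i) :=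
  match ts as ts0 return HL T ts0 -> forall i, T (nth tdef ts0 i) with
  | [::] => fun _ i => match i as i0 return T (nth tdef [::] i0) with
                         | 0%N => dflt | _.+1 => dflt end
  | t :: ts' => fun h i =>
      match i as i0 return T (nth tdef (t :: ts') i0) with
      | 0%N => h.1
      | i'.+1 => getH T dflt ts' h.2 i'
      end
  end.

Fixpoint dropH (T : tree -> Type) (ts : seq tree) : HL T ts -> forall i, HL T (dropS ts i) :=
  match ts as ts0 return HL T ts0 -> forall i, HL T (dropS ts0 i) with
  | [::] => fun h _ => h
  | t :: ts' => fun h i =>
      match i as i0 return HL T (dropS (t :: ts') i0) with
      | 0%N => h.2
      | i'.+1 => (h.1, dropH T ts' h.2 i')
      end
  end.

Fixpoint insP (f : tree -> finType) (ts : seq tree) (i : nat) {struct ts} :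
  PL f (dropS ts i) -> f (nth tdef ts i) -> PL f ts :=
  match ts as ts0 return PL f (dropS ts0 i) -> f (nth tdef ts0 i) -> PL f ts0 with
  | [::] => fun _ _ => tt
  | t :: ts' =>
      match i as i0 return PL f (dropS (t :: ts') i0) -> f (nth tdef (t :: ts') i0) -> PL f (t :: ts') with
      | 0%N => fun c k => (k, c)
      | i'.+1 => fun c k => (c.1, insP f ts' i' c.2 k)
      end
  end.

(* mode-i matricisation (i = position among the modes 1..m, counted from 0):
   rows indexed by mode i, columns by (mode 0, remaining modes). *)
Definition matI (f : tree -> finType) (r : nat) (ts : seq tree) (i : nat)
  (Z : 'I_r -> PL f ts -> C) : f (nth tdef ts i) -> ('I_r * PL f (dropS ts i))%type -> C :=
  fun k c => Z c.1 (insP f ts i c.2 k).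

Definition tenI (f : tree -> finType) (r : nat) (ts : seq tree) (i : nat)
  (M : f (nth tdef ts i) -> ('I_r * PL f (dropS ts i))%type -> C) : 'I_r -> PL f ts -> C :=
  fun a x => \sum_(c : PL f (dropS ts i)) \sum_(k : f (nth tdef ts i))
               ((insP f ts i c k == x)%:R * M k (a, c)).

Definition orthocols {J K : finType} (U : J -> K -> C) : Prop :=
  forall k k' : K, \sum_(j : J) conjc (U j k) * U j k' = (k == k')%:R.

Definition colspan {J K : finType} (U : J -> K -> C) (v : J -> C) : Prop :=
  exists x : K -> C, forall j, v j = \sum_(k : K) U j k * x k.

Definition colspan2 {J K1 K2 : finType} (A : J -> K1 -> C) (B : J -> K2 -> C) (v : J -> C) : Prop :=
  exists (x : K1 -> C) (y : K2 -> C),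
    forall j, v j = \sum_(k : K1) A j k * x k + \sum_(k : K2) B j k * y k.

Definition full_row_rank {J K : finType} (M : J -> K -> C) : Prop :=
  forall x : J -> C, (forall k, \sum_(j : J) x j * M j k = 0) -> forall j, x j = 0.

Definition inner {A B : finType} (X Y : A -> B -> C) : C :=
  \sum_(a : A) \sum_(b : B) conjc (X a b) * Y a b.

Definition solves {A B : finType} (Yc : R -> A -> B -> C) (F : (A -> B -> C) -> A -> B -> C)
  (t0 t1 : R) (Y0 : A -> B -> C) : Prop :=
  Yc t0 = Y0 /\
  (forall a b, {within [set x : R | t0 <= x <= t1], continuous (fun t => complex.Re (Yc t a b))} /\
               {within [set x : R | t0 <= x <= t1], continuous (fun t => complex.Im (Yc t a b))}) /\
  (forall t, t0 < t < t1 -> forall a b,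
      is_derive t (1 : R) (fun s => complex.Re (Yc s a b)) (complex.Re (F (Yc t) a b)) /\
      is_derive t (1 : R) (fun s => complex.Im (Yc s a b)) (complex.Im (F (Yc t) a b))).

(* X x_0 S^T : multiply the root connection tensor (resp. the leaf basis) *)
Definition rootMul (rk : tree -> nat) (r : nat) (t : tree) (S : 'I_r -> 'I_r -> C) :
  TTN rk r t -> TTN rk r t :=
  match t as t0 return TTN rk r t0 -> TTN rk r t0 with
  | Leaf l => fun U j k => \sum_(m : 'I_r) S m k * U j m
  | Node ts => fun X => (fun k ks => \sum_(m : 'I_r) S m k * X.1 m ks, X.2)
  end.

Definition zeroTTN (rk : tree -> nat) : TTN rk (rk tdef) tdef := fun _ _ => 0.

Section Integrator.
(* rk : ranks of the starting TTN; rkh : augmented ranks (of the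
   rank-augmented bases Uhat_sigma, sigma a proper subtree). *)
Variables (rk rkh : tree -> nat) (t0 t1 : R).

Local Notation kidT := (fun s => TTN rk (rk s) s).
Local Notation kidTh := (fun s => TTN rkh (rkh s) s).
Local Notation fullo := (fun s => full rk (rk s) s).
Local Notation fullh := (fun s => full rkh (rkh s) s).

(* V_{tau_i}^0 = mat_i( ten_i(Q^T) x_0 I x_{j<>i} U_{tau_j}^0 )^T *)
Definition Vmat (ts : seq tree) (kids : HL kidT ts) (i : nat)
  (Q : ('I_(rk (Node ts)) * PL (ordT rk) (dropS ts i))%type -> 'I_(rk (nth tdef ts i)) -> C) :
  ('I_(rk (Node ts)) * PL Idx (dropS ts i))%type -> 'I_(rk (nth tdef ts i)) -> C :=
  fun c k => mcS Idx (ordT rk) (dropS ts i)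
               (UmH kidT (ordT rk) fullo (dropS ts i) (dropH kidT ts kids i))
               (fun ks => Q (c.1, ks) k) c.2.

(* prolongation  pi_{tau,i}(Y) = ten_i((V mat_0(Y))^T) *)
Definition prolong (ts : seq tree) (kids : HL kidT ts) (i : nat) Q
  (Y : V rk (nth tdef ts i)) : V rk (Node ts) :=
  tenI Idx (rk (Node ts)) ts i
    (fun j c => \sum_(k : 'I_(rk (nth tdef ts i))) Vmat ts kids i Q c k * Y k j).

(* restriction  pi_{tau,i}^dagger(Z) = ten_0((mat_i(Z) V)^T) *)
Definition restrict (ts : seq tree) (kids : HL kidT ts) (i : nat) Q
  (Z : V rk (Node ts)) : V rk (nth tdef ts i) :=
  fun k j => \sum_(c : ('I_(rk (Node ts)) * PL Idx (dropS ts i))%type)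
               matI Idx (rk (Node ts)) ts i Z j c * Vmat ts kids i Q c k.

Definition Fred (ts : seq tree) (kids : HL kidT ts) (i : nat) Q
  (F : V rk (Node ts) -> V rk (Node ts)) : V rk (nth tdef ts i) -> V rk (nth tdef ts i) :=
  fun Y => restrict ts kids i Q (F (prolong ts kids i Q Y)).

(* QR decomposition  mat_i(C^0)^T = Q S^T, Q orthonormal columns, S^T upper triangular *)
Definition QRcond (ts : seq tree) (C0 : 'I_(rk (Node ts)) -> PL (ordT rk) ts -> C) (i : nat)
  (Q : ('I_(rk (Node ts)) * PL (ordT rk) (dropS ts i))%type -> 'I_(rk (nth tdef ts i)) -> C)
  (S : 'I_(rk (nth tdef ts i)) -> 'I_(rk (nth tdef ts i)) -> C) : Prop :=
  orthocols Q /\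
  (forall k l : 'I_(rk (nth tdef ts i)), (k < l)%N -> S k l = 0) /\
  (forall c k, matI (ordT rk) (rk (Node ts)) ts i C0 k c =
               \sum_(l : 'I_(rk (nth tdef ts i))) Q c l * S k l).

Definition Mhat (ts : seq tree) (kids : HL kidT ts) (kidsh : HL kidTh ts) (i : nat) :
  'I_(rkh (nth tdef ts i)) -> 'I_(rk (nth tdef ts i)) -> C :=
  fun a b => \sum_(j : Idx (nth tdef ts i))
     conjc (Umat rkh (rkh (nth tdef ts i)) (nth tdef ts i) (getH kidTh (fun _ _ => 0) ts kidsh i) j a) *
     Umat rk (rk (nth tdef ts i)) (nth tdef ts i) (getH kidT (fun _ _ => 0) ts kids i) j b.

Definition Chat0 (ts : seq tree) (C0 : 'I_(rk (Node ts)) -> PL (ordT rk) ts -> C)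
  (kids : HL kidT ts) (kidsh : HL kidTh ts) : 'I_(rk (Node ts)) -> PL (ordT rkh) ts -> C :=
  fun a => mcS (ordT rkh) (ordT rk) ts (Mhat ts kids kidsh) (C0 a).

(* Galerkin right-hand side
   Chat |-> F_tau(Chat x_0 I x_i Uhat_i) x_i Uhat_i^*  *)
Definition Galerkin (ts : seq tree) (kidsh : HL kidTh ts)
  (F : V rk (Node ts) -> V rk (Node ts))
  (Ch : 'I_(rk (Node ts)) -> PL (ordT rkh) ts -> C) : 'I_(rk (Node ts)) -> PL (ordT rkh) ts -> C :=
  let Uh := UmH kidTh (ordT rkh) fullh ts kidsh in
  let Z := F (fun a js => mcS Idx (ordT rkh) ts Uh (Ch a) js) in
  fun a ks => mcS (ordT rkh) Idx ts (fun i k j => conjc (Uh i j k)) (Z a) ks.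

(* Integ t Y0 F Y1 Ch0  :  the rank-augmenting TTN integrator, called on
   (t, Y0, F, t0, t1), may return  Yhat^1 = Y1  and  Chat^0 = Ch0
   (for some admissible choice of QR decompositions, orthonormal bases and
   with exactly solved differential equations).
   ChildInt t X0 Y0 F Xh : step (1) for a direct subtree t with starting
   basis X0 (= X_{tau_i}^0), starting value Y0 (= Y_{tau_i}^0) and reduced
   function F (= F_{tau_i}) may produce Xhat_{tau_i} = Xh. *)
Inductive Integ : forall t : tree, TTN rk (rk t) t -> (V rk t -> V rk t) ->
                  TTN rkh (rk t) t -> ConnT rkh (rk t) t -> Prop :=
| IntegNode : forall (ts : seq tree)
    (C0 : 'I_(rk (Node ts)) -> PL (ordT rk) ts -> C) (kids : HL kidT ts)
    (F : V rk (Node ts) -> V rk (Node ts))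
    (kidsh : HL kidTh ts)
    (Q : forall i, ('I_(rk (Node ts)) * PL (ordT rk) (dropS ts i))%type -> 'I_(rk (nth tdef ts i)) -> C)
    (S : forall i, 'I_(rk (nth tdef ts i)) -> 'I_(rk (nth tdef ts i)) -> C)
    (Ch : R -> 'I_(rk (Node ts)) -> PL (ordT rkh) ts -> C),
    (forall i, (i < size ts)%N -> QRcond ts C0 i (Q i) (S i)) ->
    (forall i, (i < size ts)%N ->
       ChildInt (nth tdef ts i)
         (getH kidT (fun _ _ => 0) ts kids i)
         (rootMul rk (rk (nth tdef ts i)) (nth tdef ts i) (S i) (getH kidT (fun _ _ => 0) ts kids i))
         (Fred ts kids i (Q i) F)
         (getH kidTh (fun _ _ => 0) ts kidsh i)) ->
    solves Ch (Galerkin ts kidsh F) t0 t1 (Chat0 ts C0 kids kidsh) ->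
    Integ (Node ts) (C0, kids) F (Ch t1, kidsh) (Chat0 ts C0 kids kidsh)
with ChildInt : forall t : tree, TTN rk (rk t) t -> TTN rk (rk t) t -> (V rk t -> V rk t) ->
                TTN rkh (rkh t) t -> Prop :=
| ChildLeaf : forall (l : nat) (X0 Y0 : TTN rk (rk (Leaf l)) (Leaf l))
    (F : V rk (Leaf l) -> V rk (Leaf l)) (Yc : R -> V rk (Leaf l))
    (Uh : TTN rkh (rkh (Leaf l)) (Leaf l)),
    solves Yc F t0 t1 (full rk (rk (Leaf l)) (Leaf l) Y0) ->
    orthocols Uh ->
    (forall v, colspan Uh v <-> colspan2 (fun j k => Yc t1 k j) X0 v) ->
    ChildInt (Leaf l) X0 Y0 F Uh
| ChildNode : forall (ts : seq tree) (X0 Y0 : TTN rk (rk (Node ts)) (Node ts))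
    (F : V rk (Node ts) -> V rk (Node ts))
    (Y1 : TTN rkh (rk (Node ts)) (Node ts))
    (Ch0 : 'I_(rk (Node ts)) -> PL (ordT rkh) ts -> C)
    (Qh : PL (ordT rkh) ts -> 'I_(rkh (Node ts)) -> C),
    Integ (Node ts) Y0 F Y1 Ch0 ->
    orthocols Qh ->
    (forall v, colspan Qh v <-> colspan2 (fun ks a => Y1.1 a ks) (fun ks a => Ch0 a ks) v) ->
    ChildInt (Node ts) X0 Y0 F ((fun a ks => Qh ks a), Y1.2).

End Integrator.

Fixpoint HLall (T : tree -> Type) (P : forall s, T s -> Prop) (ts : seq tree) : HL T ts -> Prop :=
  match ts as ts0 return HL T ts0 -> Prop with
  | [::] => fun _ => True
  | t :: ts' => fun h => P t h.1 /\ HLall T P ts' h.2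
  end.

Fixpoint ortho_below (rk : tree -> nat) (r0 : nat) (t : tree) : TTN rk r0 t -> Prop :=
  match t as t0 return TTN rk r0 t0 -> Prop with
  | Leaf _ => fun _ => True
  | Node ts => fun X =>
      HLall (fun s => TTN rk (rk s) s)
        (fun s Xs => orthocols (Umat rk (rk s) s Xs) /\ ortho_below rk (rk s) s Xs) ts X.2
  end.

Definition full_ml_rank (rk : tree -> nat) (r0 : nat) (ts : seq tree)
  (C0 : 'I_r0 -> PL (ordT rk) ts -> C) : Prop :=
  full_row_rank C0 /\
  forall i, (i < size ts)%N -> full_row_rank (matI (ordT rk) r0 ts i C0).

Fixpoint full_tree_rank (rk : tree -> nat) (r0 : nat) (t : tree) : TTN rk r0 t -> Prop :=
  match t as t0 return TTN rk r0 t0 -> Prop with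
  | Leaf _ => fun _ => True
  | Node ts => fun X =>
      full_ml_rank rk r0 ts X.1 /\
      HLall (fun s => TTN rk (rk s) s) (fun s Xs => full_tree_rank rk (rk s) s Xs) ts X.2
  end.

Definition linear_op {A B : finType} (H : (A -> B -> C) -> A -> B -> C) : Prop :=
  forall (al be : C) (Y Z : A -> B -> C),
    H (fun a b => al * Y a b + be * Z a b) = (fun a b => al * H Y a b + be * H Z a b).

Definition self_adjoint {A B : finType} (H : (A -> B -> C) -> A -> B -> C) : Prop :=
  forall Y Z : A -> B -> C, inner (H Y) Z = inner Y (H Z).

Definition energy {A B : finType} (H : (A -> B -> C) -> A -> B -> C) (Y : A -> B -> C) : C :=
  inner Y (H Y).

End TTNdefs.

From HB Require Import structures.
From mathcomp Require Import all_boot all_order all_algebra.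
From mathcomp Require Import complex.
From mathcomp Require Import all_classical all_reals topology normedtype derive.
From mathcomp Require Import ring.
Import Order.TTheory GRing.Theory Num.Theory.
Local Open Scope ring_scope.

(* First, by induction along the integrator, every augmented
   basis Uhat_s has orthonormal columns and its range contains that of the old
   basis U^0_s; for a non-leaf child this needs the QR factor S to be invertible,
   which is where full tree rank enters.  Hence the augmented starting core
   represents the starting value exactly: Chat^0 x_i Uhat_i = Y^0.  Second, with
   P = (x_i Uhat_i) the core equation is the Galerkin system C' = P^* (-i H (P C)),
   so for w = P^* H P C self-adjointness gives
     d/dt E(P C) = 2 Re <P C', H P C> = 2 Re <-i w, w> = 0,
   and the mean value theorem makes E constant over the step. *)

Section MultiModeProduct.
Context {R : realType}.
Local Notation C := R[i].
Local Notation mc := (@mcS R _ _ _).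
Local Notation mxfam f g ts := (forall i, f (nth tdef ts i) -> g (nth tdef ts i) -> C).

Definition linear_form {K : finType} (L : (K -> C) -> C) :=
  forall (a b : C) X Y, L (fun k => a * X k + b * Y k) = a * L X + b * L Y.

Lemma linear_form0 {K : finType} (L : (K -> C) -> C) : linear_form L -> L (fun _ => 0) = 0.
Proof.
move=> linL; have := linL 0 0 (fun _ => 0) (fun _ => 0).
under eq_fun do rewrite mul0r addr0.
by rewrite !mul0r addr0.
Qed.

Lemma linear_form_sum {K : finType} {I : Type} (L : (K -> C) -> C) (s : seq I)
    (c : I -> C) (G : I -> K -> C) :
  linear_form L -> L (fun k => \sum_(z <- s) c z * G z k) = \sum_(z <- s) c z * L (G z).
Proof.
move=> linL; elim: s => [|z s IH].
  by under eq_fun do rewrite big_nil; rewrite big_nil linear_form0.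
under eq_fun do rewrite big_cons; rewrite big_cons -IH.
have := linL (c z) 1 (G z) (fun k => \sum_(j <- s) c j * G j k).
by under eq_fun do rewrite mul1r; rewrite mul1r.
Qed.

Lemma sum_delta {K : finType} (G : K -> C) k : G k = \sum_y G y * (k == y)%:R.
Proof.
rewrite (bigD1 k) //= eqxx mulr1 big1 ?addr0 // => y; rewrite eq_sym => /negbTE ->.
by rewrite mulr0.
Qed.

Lemma linear_form_decomp {K : finType} (L : (K -> C) -> C) G :
  linear_form L -> L G = \sum_y G y * L (fun k => (k == y)%:R).
Proof.
by move=> linL; rewrite -linear_form_sum //; congr L; apply: funext => k; apply: sum_delta.
Qed.

Lemma mcS_linear {f g : tree -> finType} {ts : seq tree} (M : mxfam f g ts) x :
  linear_form (fun G => mc M G x).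
Proof.
elim: ts M x => [|t ts IH] M x a b G G' //=.
rewrite !mulr_sumr -big_split /=; apply: eq_bigr => y _.
rewrite (IH (fun i => M i.+1) x.2 a b (fun ys => G (y, ys)) (fun ys => G' (y, ys))).
by rewrite mulrDr !mulrA ![_ * M _ _ _]mulrC.
Qed.

Lemma mcS_sum {f g : tree -> finType} {ts : seq tree} (M : mxfam f g ts) x {I : Type} (s : seq I) c
    (G : I -> _ -> C) :
  mc M (fun y => \sum_(z <- s) c z * G z y) x = \sum_(z <- s) c z * mc M (G z) x.
Proof. by have /= := linear_form_sum (fun G => mc M G x) s c G (mcS_linear M x). Qed.

Lemma mcS_decomp {f g : tree -> finType} {ts : seq tree} (M : mxfam f g ts) G x :
  mc M G x = \sum_y G y * mc M (fun y' => (y' == y)%:R) x.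
Proof. by have /= := linear_form_decomp (fun G => mc M G x) G (mcS_linear M x). Qed.

Lemma mcS0 {f g : tree -> finType} {ts : seq tree} (M : mxfam f g ts) x : mc M (fun _ => 0) x = 0.
Proof. exact: linear_form0 (mcS_linear M x). Qed.

Lemma eq_mcS {f g : tree -> finType} {ts : seq tree} (M M' : mxfam f g ts) G G' x :
  (forall i, (i < size ts)%N -> forall x y, M i x y = M' i x y) -> (forall y, G y = G' y) ->
  mc M G x = mc M' G' x.
Proof.
elim: ts M M' G G' x => [|t ts IH] M M' G G' x eqM eqG /=; first exact: eqG.
apply: eq_bigr => y _; rewrite (eqM 0%N) //; congr (_ * _); apply: IH.
  by move=> i; apply: (eqM i.+1).
by move=> ys; apply: eqG.
Qed.

Lemma eq_mcSr {f g : tree -> finType} {ts : seq tree} {M : mxfam f g ts} {G G' x} :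
  (forall y, G y = G' y) -> mc M G x = mc M G' x.
Proof. exact: eq_mcS. Qed.

Lemma mcS_comp {f g h : tree -> finType} {ts : seq tree} (M : mxfam f g ts) (N : mxfam g h ts) G x :
  mc M (mc N G) x = mc (fun i x z => \sum_y M i x y * N i y z) G x.
Proof.
elim: ts M N G x => [|t ts IH] M N G x //=.
under eq_bigr => y _ do rewrite (mcS_sum (fun i => M i.+1) x.2 _ (N 0%N y)
  (fun z ys => mc (fun i => N i.+1) (fun zs => G (z, zs)) ys)).
under eq_bigr => y _ do under eq_bigr => z _ do rewrite IH.
under eq_bigr do rewrite mulr_sumr; rewrite exchange_big /=.
by apply: eq_bigr => z _; rewrite mulr_suml; apply: eq_bigr => y _; rewrite mulrA.
Qed.

Lemma mcS_id {f : tree -> finType} {ts : seq tree} (M : mxfam f f ts) G x :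
  (forall i, (i < size ts)%N -> forall x y, M i x y = (x == y)%:R) -> mc M G x = G x.
Proof.
elim: ts M G x => [|t ts IH] M G x M1 /=; first by case: x.
rewrite (bigD1 x.1) //= M1 // eqxx mul1r big1 ?addr0.
  by rewrite IH; [case: x | move=> i; apply: (M1 i.+1)].
by move=> y; rewrite M1 // eq_sym => /negbTE ->; rewrite mul0r.
Qed.

Lemma mcS_conj_delta {f g : tree -> finType} {ts : seq tree} (M : mxfam f g ts) x0 y0 :
  mc (fun i y x => (M i x y)^*%C) (fun x => (x == x0)%:R) y0 =
  ((mc M (fun y => (y == y0)%:R) x0)^*)%C.
Proof.
elim: ts M x0 y0 => [|t ts IH] M x0 y0 /=.
  by case: x0; case: y0 => /=; apply/eqP; rewrite eq_complex /= oppr0 !eqxx.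
case: x0 => a0 xs0; case: y0 => b0 ys0 /=.
rewrite (bigD1 a0) //= big1 ?addr0; last first.
  move=> x /negbTE neq_x; rewrite (@eq_mcSr _ _ _ _ _ (fun _ => 0)) ?mcS0 ?mulr0 //.
  by move=> ys; rewrite xpair_eqE neq_x.
rewrite (bigD1 b0) //= big1 ?addr0; last first.
  move=> y /negbTE neq_y; rewrite (@eq_mcSr _ _ _ _ _ (fun _ => 0)) ?mcS0 ?mulr0 //.
  by move=> ys; rewrite xpair_eqE neq_y.
rewrite rmorphM /=; congr (_ * _).
transitivity (mc (fun i y x => (M i.+1 x y)^*%C) (fun ys => (ys == xs0)%:R) ys0).
  by apply: eq_mcSr => ys; rewrite xpair_eqE eqxx.
rewrite (IH (fun i => M i.+1)); congr conjc; apply: eq_mcSr => ys.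
by rewrite xpair_eqE eqxx.
Qed.

Lemma mcS_adjoint {f g : tree -> finType} {ts : seq tree} (M : mxfam f g ts) G W :
  \sum_x ((mc M G x)^*%C) * W x = \sum_y ((G y)^*%C) * mc (fun i y x => (M i x y)^*%C) W y.
Proof.
under eq_bigr => x _ do rewrite mcS_decomp rmorph_sum mulr_suml.
rewrite exchange_big /=; apply: eq_bigr => y _.
rewrite mcS_decomp mulr_sumr; apply: eq_bigr => x _.
by rewrite (mcS_conj_delta M x y) rmorphM /= -mulrA [W x * _]mulrC.
Qed.

Lemma mcS_isometry {f g : tree -> finType} {ts : seq tree} (M : mxfam f g ts) G G' :
  (forall i, (i < size ts)%N -> forall y y', \sum_x ((M i x y)^*%C) * M i x y' = (y == y')%:R) ->
  \sum_x ((mc M G x)^*%C) * mc M G' x = \sum_y ((G y)^*%C) * G' y.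
Proof.
move=> orthoM; rewrite mcS_adjoint; apply: eq_bigr => y _; congr (_ * _).
by rewrite mcS_comp mcS_id.
Qed.

End MultiModeProduct.

Lemma HLall_getH {T : tree -> Type} {P : forall s, T s -> Prop} {ts h dflt i} :
  HLall T P ts h -> (i < size ts)%N -> P (nth tdef ts i) (getH T dflt ts h i).
Proof.
elim: ts h i => [|t ts IH] h [|i] //= [Ph Phs] ? //.
exact: IH.
Qed.

Section FiniteMatrices.
Context {R : realType}.
Local Notation C := R[i].

Lemma UmH_getH {n : nat -> nat} {T : tree -> Type} {g : tree -> finType}
    {fl : forall s, T s -> g s -> Idx n s -> C} {ts h} dflt {i} :
  (i < size ts)%N ->
  forall j k, UmH R n T g fl ts h i j k = fl (nth tdef ts i) (getH T dflt ts h i) k j.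
Proof.
elim: ts h i => [|t ts IH] h [|i] //= ? j k.
exact: IH.
Qed.

Lemma colspan2_col_r {J K1 K2 : finType} (A : J -> K1 -> C) (B : J -> K2 -> C) b :
  colspan2 R A B (fun j => B j b).
Proof.
exists (fun _ => 0), (fun k => (k == b)%:R) => j.
rewrite big1 ?add0r => [|k _]; last by rewrite mulr0.
by rewrite (bigD1 b) //= eqxx mulr1 big1 ?addr0 // => k /negbTE ->; rewrite mulr0.
Qed.

Lemma colspan_sum {J K A : finType} {U : J -> K -> C} (c : A -> C) {v : A -> J -> C} :
  (forall a, colspan R U (v a)) -> colspan R U (fun j => \sum_a c a * v a j).
Proof.
move=> /choice[x vE]; exists (fun k => \sum_a c a * x a k) => j.
under eq_bigr => a _ do rewrite vE mulr_sumr.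
rewrite exchange_big /=; apply: eq_bigr => k _.
by rewrite mulr_sumr; apply: eq_bigr => a _; rewrite mulrCA mulrA.
Qed.

Lemma orthocols_proj {J K : finType} (U : J -> K -> C) v :
  orthocols R U -> colspan R U v ->
  forall j, \sum_k U j k * (\sum_j' ((U j' k)^*%C) * v j') = v j.
Proof.
move=> orthoU [x vE] j; rewrite vE; apply: eq_bigr => k _; congr (_ * _).
under eq_bigr => j' _ do rewrite vE mulr_sumr.
rewrite exchange_big /= (sum_delta x k); apply: eq_bigr => k' _.
by rewrite -orthoU mulr_sumr; apply: eq_bigr => j' _; rewrite mulrA mulrC.
Qed.

Lemma full_row_rank_inv {r : nat} {S : 'I_r -> 'I_r -> C} : full_row_rank R S ->
  exists T : 'I_r -> 'I_r -> C, (forall m b, \sum_k S m k * T k b = (m == b)%:R) /\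
                                (forall m b, \sum_k T m k * S k b = (m == b)%:R).
Proof.
move=> frS; pose A : 'M[C]_r := \matrix_(m, k) S m k.
have freeA : row_free A.
  rewrite -kermx_eq0; apply/eqP/matrixP => i j; rewrite [RHS]mxE.
  apply: (frS (fun m => kermx A i m)) => k.
  have /(congr1 (fun M : 'M[C]_(1, r) => M 0 k)) := sub_kermxP (row_sub i (kermx A)).
  rewrite [RHS]mxE [LHS]mxE => kerA0; rewrite -[RHS]kerA0.
  by apply: eq_bigr => m _; rewrite !mxE.
have unitA : A \in unitmx by rewrite -row_free_unit.
exists (fun k b => invmx A k b); split=> m b.
  have /(congr1 (fun M : 'M[C]_r => M m b)) := mulmxV unitA.
  by rewrite !mxE => <-; apply: eq_bigr => k _; rewrite mxE.
have /(congr1 (fun M : 'M[C]_r => M m b)) := mulVmx unitA.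
by rewrite !mxE => <-; apply: eq_bigr => k _; rewrite mxE.
Qed.

Lemma full_row_rank_QR {J K : finType} {r : nat} {M : J -> K -> C} {Q : K -> 'I_r -> C}
    {S : J -> 'I_r -> C} :
  (forall c k, M k c = \sum_l Q c l * S k l) -> full_row_rank R M -> full_row_rank R S.
Proof.
move=> ME frM x xS0; apply: frM => c.
under eq_bigr => k _ do rewrite ME mulr_sumr.
rewrite exchange_big /= big1 // => l _.
transitivity (Q c l * \sum_k x k * S k l); last by rewrite xS0 mulr0.
by rewrite mulr_sumr; apply: eq_bigr => k _; rewrite mulrCA.
Qed.

Lemma full_row_rank_mull {K : finType} {r : nat} (S : 'I_r -> 'I_r -> C) (M : 'I_r -> K -> C) :
  full_row_rank R S -> full_row_rank R M ->
  full_row_rank R (fun k ks => \sum_m S m k * M m ks).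
Proof.
move=> frS frM x x0.
have [T [_ TS1]] := full_row_rank_inv frS.
have Sx0 : forall m, \sum_k S m k * x k = 0.
  apply: (frM (fun m => \sum_k S m k * x k)) => ks; rewrite -[RHS](x0 ks).
  under eq_bigr => m _ do rewrite mulr_suml.
  rewrite exchange_big /=; apply: eq_bigr => k _; rewrite mulr_sumr.
  by apply: eq_bigr => m _; rewrite mulrAC mulrC.
move=> b; rewrite (sum_delta x b).
transitivity (\sum_m T b m * \sum_k S m k * x k).
  under [RHS]eq_bigr => m _ do rewrite mulr_sumr.
  rewrite exchange_big /=; apply: eq_bigr => k _.
  by rewrite -TS1 mulr_sumr; apply: eq_bigr => m _; rewrite mulrC -mulrA.
by rewrite big1 // => m _; rewrite Sx0 mulr0.
Qed.

Lemma full_row_rank_mulr_fst {J P : finType} {r : nat} (N : J -> ('I_r * P)%type -> C)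
    (S : 'I_r -> 'I_r -> C) :
  full_row_rank R S -> full_row_rank R N ->
  full_row_rank R (fun k ac => \sum_m S m ac.1 * N k (m, ac.2)).
Proof.
move=> frS frN x x0; apply: frN => [[m c]].
apply: (frS (fun m => \sum_k x k * N k (m, c))) => a; rewrite -[RHS](x0 (a, c)).
under eq_bigr => m' _ do rewrite mulr_suml.
rewrite exchange_big /=; apply: eq_bigr => k _; rewrite mulr_sumr.
by apply: eq_bigr => m' _; rewrite -mulrA [N _ _ * _]mulrC.
Qed.

Context {n : nat -> nat} {rk : tree -> nat}.

Lemma full_tree_rank_rootMul {t : tree} {r : nat} {S : 'I_r -> 'I_r -> C} {X : TTN R n rk r t} :
  full_row_rank R S -> full_tree_rank R n rk r t X ->
  full_tree_rank R n rk r t (rootMul R n rk r t S X).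
Proof.
case: t X => [//|ts] [C0 kids] frS /= [[fr0 fri] frkids]; split => //; split.
  exact: full_row_rank_mull.
by move=> i ?; apply: full_row_rank_mulr_fst (fri i _).
Qed.

Lemma full_rootMul (t : tree) (r : nat) (S : 'I_r -> 'I_r -> C) (X : TTN R n rk r t) a j :
  full R n rk r t (rootMul R n rk r t S X) a j = \sum_m S m a * full R n rk r t X m j.
Proof. by case: t X j => [l|ts] X j //=; rewrite -mcS_sum. Qed.

Lemma full_rootMulK (t : tree) (r : nat) (S T : 'I_r -> 'I_r -> C) (X : TTN R n rk r t) b j :
  (forall m b, \sum_k S m k * T k b = (m == b)%:R) ->
  \sum_a T a b * full R n rk r t (rootMul R n rk r t S X) a j = full R n rk r t X b j.
Proof.
move=> ST1; under eq_bigr => a _ do rewrite full_rootMul mulr_sumr.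
rewrite exchange_big /= [RHS](sum_delta (fun m => full R n rk r t X m j) b).
apply: eq_bigr => m _; rewrite eq_sym -ST1 mulr_sumr; apply: eq_bigr => a _.
by rewrite [RHS]mulrC mulrA [T _ _ * _]mulrC.
Qed.

End FiniteMatrices.

Scheme Integ_min := Minimality for Integ Sort Prop
  with ChildInt_min := Minimality for ChildInt Sort Prop.

Section IntegratorInvariants.
Context {R : realType} {n : nat -> nat} {rk rkh : tree -> nat} {t0 t1 : R}.
Local Notation C := R[i].
Local Notation kidT := (fun s => TTN R n rk (rk s) s).
Local Notation kidTh := (fun s => TTN R n rkh (rkh s) s).
Local Notation getK := (getH kidT (fun _ _ => 0)).
Local Notation getKh := (getH kidTh (fun _ _ => 0)).

(* The child is started from X0 x_0 S^T, where S is the triangular factor of a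
   QR decomposition and hence invertible under full tree rank. *)
Definition child_spec (t : tree) (X0 Y0 : TTN R n rk (rk t) t) (F : V R n rk t -> V R n rk t)
    (Xh : TTN R n rkh (rkh t) t) : Prop :=
  forall S : 'I_(rk t) -> 'I_(rk t) -> C, full_row_rank R S ->
    Y0 = rootMul R n rk (rk t) t S X0 -> full_tree_rank R n rk (rk t) t X0 ->
    orthocols R (Umat R n rkh (rkh t) t Xh) /\
    forall b, colspan R (Umat R n rkh (rkh t) t Xh) (fun j => Umat R n rk (rk t) t X0 j b).

Definition integ_spec (t : tree) : TTN R n rk (rk t) t -> (V R n rk t -> V R n rk t) ->
    TTN R n rkh (rk t) t -> ConnT R rkh (rk t) t -> Prop :=
  match t with
  | Leaf _ => fun _ _ _ _ => False (* the integrator is only called on non-leaf trees *)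
  | Node ts => fun Y0 F Y1 Ch0 =>
     full_tree_rank R n rk (rk (Node ts)) (Node ts) Y0 ->
     [/\ forall i, (i < size ts)%N ->
           orthocols R (Umat R n rkh (rkh (nth tdef ts i)) (nth tdef ts i) (getKh ts Y1.2 i)),
         forall a js, full R n rkh (rk (Node ts)) (Node ts) (Ch0, Y1.2) a js
                      = full R n rk (rk (Node ts)) (Node ts) Y0 a js
       & exists2 Ch, solves R Ch (Galerkin R n rk rkh ts Y1.2 F) t0 t1 Ch0 & Y1.1 = Ch t1]
  end.

Lemma integ_node_spec ts C0 kids F kidsh Q S Ch :
  (forall i, (i < size ts)%N -> QRcond R rk ts C0 i (Q i) (S i)) ->
  (forall i, (i < size ts)%N ->
     child_spec (nth tdef ts i) (getK ts kids i)
       (rootMul R n rk (rk (nth tdef ts i)) (nth tdef ts i) (S i) (getK ts kids i))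
       (Fred R n rk ts kids i (Q i) F) (getKh ts kidsh i)) ->
  solves R Ch (Galerkin R n rk rkh ts kidsh F) t0 t1 (Chat0 R n rk rkh ts C0 kids kidsh) ->
  integ_spec (Node ts) (C0, kids) F (Ch t1, kidsh) (Chat0 R n rk rkh ts C0 kids kidsh).
Proof.
move=> QR IH sol /= [[_ frC0] frkids].
have {}IH i (lt_i : (i < size ts)%N) := IH i lt_i (S i)
  (full_row_rank_QR (QR i lt_i).2.2 (frC0 i lt_i)) erefl (HLall_getH frkids lt_i).
split; [by move=> i lt_i; case: (IH i lt_i) | | by exists Ch].
move=> a js; rewrite /Chat0 mcS_comp; apply: eq_mcS => // i lt_i x z.
rewrite (UmH_getH (T := kidT) (fun _ _ => 0) lt_i).
under eq_bigr => y _ do rewrite (UmH_getH (T := kidTh) (fun _ _ => 0) lt_i).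
have [orthoU spanU] := IH i lt_i.
exact: orthocols_proj orthoU (spanU z) x.
Qed.

Lemma child_leaf_spec l X0 Y0 F (Yc : R -> V R n rk (Leaf l)) Uh :
  orthocols R Uh ->
  (forall v, colspan R Uh v <-> colspan2 R (fun j k => Yc t1 k j) X0 v) ->
  child_spec (Leaf l) X0 Y0 F Uh.
Proof. by move=> orthoU spanU S _ _ _; split=> // b; apply/spanU/colspan2_col_r. Qed.

Lemma child_node_spec ts X0 Y0 F Y1 Ch0 (Qh : PL (ordT rkh) ts -> 'I_(rkh (Node ts)) -> C) :
  integ_spec (Node ts) Y0 F Y1 Ch0 -> orthocols R Qh ->
  (forall v, colspan R Qh v <-> colspan2 R (fun ks a => Y1.1 a ks) (fun ks a => Ch0 a ks) v) ->
  child_spec (Node ts) X0 Y0 F ((fun a ks => Qh ks a), Y1.2).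
Proof.
move=> IH orthoQ spanQ S frS Y0E frX0; subst Y0.
have [orthoUh reprY0 _] := IH (full_tree_rank_rootMul frS frX0).
set U := UmH R n kidTh (ordT rkh) (fun s => full R n rkh (rkh s) s) ts Y1.2.
have orthoU i : (i < size ts)%N -> forall y y', \sum_x ((U i x y)^*%C) * U i x y' = (y == y')%:R.
  move=> lt_i y y'; rewrite /U.
  under eq_bigr do rewrite !(UmH_getH (T := kidTh) (fun _ _ => 0) lt_i).
  exact: orthoUh.
split=> [a b|b]; first by rewrite /Umat /= mcS_isometry.
have [T [ST1 _]] := full_row_rank_inv frS.
have spanY0 a : colspan R (Umat R n rkh (rkh (Node ts)) (Node ts) ((fun a ks => Qh ks a), Y1.2))
    (fun js => full R n rk _ (Node ts) (rootMul R n rk _ (Node ts) S X0) a js).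
  have /spanQ[x QxE] := colspan2_col_r (fun ks a => Y1.1 a ks) (fun ks a => Ch0 a ks) a.
  have xQE ks : Ch0 a ks = \sum_k x k * Qh ks k.
    by rewrite QxE; apply: eq_bigr => k _; rewrite mulrC.
  exists x => js; rewrite -reprY0 /= (eq_mcSr xQE) mcS_sum.
  by apply: eq_bigr => k _; rewrite mulrC.
suff -> : (fun js => Umat R n rk _ (Node ts) X0 js b) =
    (fun js => \sum_a T a b * full R n rk _ (Node ts) (rootMul R n rk _ (Node ts) S X0) a js).
  exact: colspan_sum.
by apply: funext => js; rewrite full_rootMulK.
Qed.

Lemma Integ_spec {t Y0 F Y1 Ch0} :
  Integ R n rk rkh t0 t1 t Y0 F Y1 Ch0 -> integ_spec t Y0 F Y1 Ch0.
Proof.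
apply: (@Integ_min R n rk rkh t0 t1 integ_spec child_spec).
- by move=> ts C0 kids F' kidsh Q S Ch QR _; apply: integ_node_spec.
- by move=> l X0 Y0' F' Yc Uh _; apply: child_leaf_spec.
- by move=> ts X0 Y0' F' Y1' Ch0' Qh _; apply: child_node_spec.
Qed.

End IntegratorInvariants.

Section InnerProduct.
Context {R : realType}.
Local Notation C := R[i].

Lemma conj_inner {A B : finType} (X Y : A -> B -> C) : (inner R X Y)^*%C = inner R Y X.
Proof.
rewrite /inner rmorph_sum; apply: eq_bigr => a _; rewrite rmorph_sum; apply: eq_bigr => b _.
by rewrite rmorphM /= conjcK mulrC.
Qed.

Lemma inner_mulNi_addJ {A B : finType} (w : A -> B -> C) :
  inner R (fun a b => - 'i * w a b) w + (inner R (fun a b => - 'i * w a b) w)^*%C = 0.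
Proof.
have -> : inner R (fun a b => - 'i * w a b) w = 'i * inner R w w.
  rewrite /inner mulr_sumr; apply: eq_bigr => a _; rewrite mulr_sumr; apply: eq_bigr => b _.
  rewrite rmorphM rmorphN /= mulrA; congr (_ * _ * _).
  by apply/eqP; rewrite eq_complex /= opprK oppr0 !eqxx.
rewrite rmorphM /= conj_inner -mulrDl.
have -> : ('i + 'i^*)%C = 0 :> C by apply/eqP; rewrite eq_complex /= addr0 subrr !eqxx.
by rewrite mul0r.
Qed.

Context {A J K : finType} (P : J -> K -> C).

Definition embed (z : A -> K -> C) : A -> J -> C := fun a j => \sum_k z a k * P j k.
Definition embed_adj (w : A -> J -> C) : A -> K -> C := fun a k => \sum_j w a j * (P j k)^*%C.

Lemma inner_embed z w : inner R (embed z) w = inner R z (embed_adj w).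
Proof.
rewrite /inner; apply: eq_bigr => a _.
under eq_bigr => j _ do rewrite /embed rmorph_sum mulr_suml.
rewrite exchange_big /=; apply: eq_bigr => k _.
rewrite /embed_adj mulr_sumr; apply: eq_bigr => j _.
by rewrite rmorphM /= mulrAC -mulrA.
Qed.

End InnerProduct.

Section KroneckerBasis.
Context {R : realType} {n : nat -> nat} {rkh : tree -> nat}.
Local Notation C := R[i].
Local Notation kidTh := (fun s => TTN R n rkh (rkh s) s).

Definition kron_basis ts (kidsh : HL kidTh ts) : Idx n (Node ts) -> PL (ordT rkh) ts -> C :=
  fun js k => mcS R (Idx n) (ordT rkh) ts
    (UmH R n kidTh (ordT rkh) (fun s => full R n rkh (rkh s) s) ts kidsh) (fun y => (y == k)%:R) js.

Lemma full_node_kron r ts (Ch : 'I_r -> PL (ordT rkh) ts -> C) kidsh :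
  full R n rkh r (Node ts) (Ch, kidsh) = embed (kron_basis ts kidsh) Ch.
Proof. by apply: funext => a; apply: funext => js; rewrite /= mcS_decomp. Qed.

Lemma Galerkin_kron rk ts kidsh (F : V R n rk (Node ts) -> V R n rk (Node ts)) :
  Galerkin R n rk rkh ts kidsh F =
  fun z => embed_adj (kron_basis ts kidsh) (F (embed (kron_basis ts kidsh) z)).
Proof.
apply: funext => z; apply: funext => a; apply: funext => ks.
rewrite /Galerkin -full_node_kron mcS_decomp /embed_adj; apply: eq_bigr => js _.
by rewrite mcS_conj_delta.
Qed.

End KroneckerBasis.

Section ComplexCalculus.
Import numFieldNormedType.Exports.
Local Open Scope classical_set_scope.
Context {R : realType}.
Local Notation C := R[i].
Local Notation Re := complex.Re.
Local Notation Im := complex.Im.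

Lemma ReD (x y : C) : Re (x + y) = Re x + Re y. Proof. by case: x; case: y. Qed.
Lemma ImD (x y : C) : Im (x + y) = Im x + Im y. Proof. by case: x; case: y. Qed.
Lemma ReM (x y : C) : Re (x * y) = Re x * Re y - Im x * Im y.
Proof. by case: x; case: y. Qed.
Lemma ImM (x y : C) : Im (x * y) = Re x * Im y + Im x * Re y.
Proof. by case: x => a b; case: y. Qed.
Lemma ReJ (x : C) : Re (x^*)%C = Re x. Proof. by case: x. Qed.
Lemma ImJ (x : C) : Im (x^*)%C = - Im x. Proof. by case: x. Qed.

Context (t0 t1 : R).

Definition has_deriv_on (h h' : R -> R) :=
  {within [set x | t0 <= x <= t1], continuous h} /\
  forall t, t0 < t < t1 -> is_derive t 1 h (h' t).

Lemma eq_has_deriv_on {h h' k k'} : (forall s, h s = k s) ->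
  (forall t, t0 < t < t1 -> h' t = k' t) -> has_deriv_on h h' -> has_deriv_on k k'.
Proof.
move=> hk h'k' [cont dh]; have <- : h = k by apply: funext.
by split=> // t tin; rewrite -h'k' //; apply: dh.
Qed.

Lemma has_deriv_on_cst c : has_deriv_on (fun _ => c) (fun _ => 0).
Proof. by split=> [x|t _]; [apply: cvg_cst | apply: is_derive_cst]. Qed.

Lemma has_deriv_onD {h h' k k'} : has_deriv_on h h' -> has_deriv_on k k' ->
  has_deriv_on (fun s => h s + k s) (fun s => h' s + k' s).
Proof.
move=> [ch dh] [ck dk]; split=> [x|t tin]; first by apply: cvgD; [apply: ch | apply: ck].
exact: is_deriveD (dh t tin) (dk t tin).
Qed.

Lemma has_deriv_onN {h h'} : has_deriv_on h h' -> has_deriv_on (fun s => - h s) (fun s => - h' s).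
Proof.
move=> [ch dh]; split=> [x|t tin]; first by apply: cvgN; apply: ch.
exact: is_deriveN (dh t tin).
Qed.

Lemma has_deriv_onM {h h' k k'} : has_deriv_on h h' -> has_deriv_on k k' ->
  has_deriv_on (fun s => h s * k s) (fun s => h' s * k s + h s * k' s).
Proof.
move=> [ch dh] [ck dk]; split=> [x|t tin]; first by apply: cvgM; [apply: ch | apply: ck].
have := is_deriveM (dh t tin) (dk t tin); move/is_derive_eq; apply.
by rewrite /GRing.scale /=; ring.
Qed.

Lemma has_deriv_on0_eq {h} : t0 < t1 -> has_deriv_on h (fun _ => 0) -> h t1 = h t0.
Proof.
move=> lt01 [conth dh]; rewrite -set_itvcc in conth.
have [c _] := MVT lt01 (fun x xin => dh x (xin : t0 < x < t1)) conth.
by rewrite mul0r => /eqP; rewrite subr_eq0 => /eqP.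
Qed.

Definition is_cderiv_on (g g' : R -> C) :=
  has_deriv_on (fun s => Re (g s)) (fun s => Re (g' s)) /\
  has_deriv_on (fun s => Im (g s)) (fun s => Im (g' s)).

Lemma solves_is_cderiv_on {A B : finType} {Yc : R -> A -> B -> C} {F Y0} :
  solves R Yc F t0 t1 Y0 -> forall a b, is_cderiv_on (fun s => Yc s a b) (fun s => F (Yc s) a b).
Proof.
move=> [_ [cont dY]] a b; have [cRe cIm] := cont a b.
by split; split=> // t /dY/(_ a b) [].
Qed.

Lemma eq_is_cderiv_on {g g' h h'} : (forall s, g s = h s) ->
  (forall t, t0 < t < t1 -> g' t = h' t) -> is_cderiv_on g g' -> is_cderiv_on h h'.
Proof.
move=> gh g'h' [dRe dIm]; split.
  by apply: eq_has_deriv_on dRe => [s|t /g'h'->]; rewrite ?gh.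
by apply: eq_has_deriv_on dIm => [s|t /g'h'->]; rewrite ?gh.
Qed.

Lemma is_cderiv_on_cst c : is_cderiv_on (fun _ => c) (fun _ => 0).
Proof. by split; apply: has_deriv_on_cst. Qed.

Lemma is_cderiv_onD {f f' g g'} : is_cderiv_on f f' -> is_cderiv_on g g' ->
  is_cderiv_on (fun s => f s + g s) (fun s => f' s + g' s).
Proof.
move=> [fRe fIm] [gRe gIm]; split.
  by apply: eq_has_deriv_on (has_deriv_onD fRe gRe) => [s|t _]; rewrite ReD.
by apply: eq_has_deriv_on (has_deriv_onD fIm gIm) => [s|t _]; rewrite ImD.
Qed.

Lemma is_cderiv_onM {f f' g g'} : is_cderiv_on f f' -> is_cderiv_on g g' ->
  is_cderiv_on (fun s => f s * g s) (fun s => f' s * g s + f s * g' s).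
Proof.
move=> [fRe fIm] [gRe gIm]; split.
  apply: eq_has_deriv_on
    (has_deriv_onD (has_deriv_onM fRe gRe) (has_deriv_onN (has_deriv_onM fIm gIm))).
    by move=> s; rewrite ReM.
  by move=> t _; rewrite ReD !ReM; ring.
apply: eq_has_deriv_on (has_deriv_onD (has_deriv_onM fRe gIm) (has_deriv_onM fIm gRe)).
  by move=> s; rewrite ImM.
by move=> t _; rewrite ImD !ImM; ring.
Qed.

Lemma is_cderiv_on_conj {f f'} : is_cderiv_on f f' ->
  is_cderiv_on (fun s => (f s)^*%C) (fun s => (f' s)^*%C).
Proof.
move=> [fRe fIm]; split; first by apply: eq_has_deriv_on fRe => [s|t _]; rewrite ReJ.
by apply: eq_has_deriv_on (has_deriv_onN fIm) => [s|t _]; rewrite ImJ.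
Qed.

Lemma is_cderiv_on_sum {I : Type} (s : seq I) (F F' : I -> R -> C) :
  (forall i, is_cderiv_on (F i) (F' i)) ->
  is_cderiv_on (fun x => \sum_(i <- s) F i x) (fun x => \sum_(i <- s) F' i x).
Proof.
move=> dF; elim: s => [|i s IH].
  by apply: eq_is_cderiv_on (is_cderiv_on_cst 0) => [x|x _]; rewrite big_nil.
by apply: eq_is_cderiv_on (is_cderiv_onD (dF i) IH) => [x|x _]; rewrite big_cons.
Qed.

Lemma is_cderiv_on0_eq g : t0 < t1 -> is_cderiv_on g (fun _ => 0) -> g t1 = g t0.
Proof.
move=> lt01 [dRe dIm]; apply/eqP; rewrite eq_complex.
by rewrite (has_deriv_on0_eq lt01 dRe) (has_deriv_on0_eq lt01 dIm) !eqxx.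
Qed.

Lemma is_cderiv_on_inner {A B : finType} {X X' Y Y' : R -> A -> B -> C} :
  (forall a b, is_cderiv_on (fun s => X s a b) (fun s => X' s a b)) ->
  (forall a b, is_cderiv_on (fun s => Y s a b) (fun s => Y' s a b)) ->
  is_cderiv_on (fun s => inner R (X s) (Y s))
               (fun s => inner R (X' s) (Y s) + inner R (X s) (Y' s)).
Proof.
move=> dX dY; apply: eq_is_cderiv_on (is_cderiv_on_sum _ _ _ (fun a =>
  is_cderiv_on_sum _ _ _ (fun b => is_cderiv_onM (is_cderiv_on_conj (dX a b)) (dY a b)))) => //.
by move=> t _; rewrite /inner -big_split; apply: eq_bigr => a _; rewrite -big_split.
Qed.

Lemma is_cderiv_on_linear_op {A B : finType} {L : (A -> B -> C) -> A -> B -> C}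
    {Y Y' : R -> A -> B -> C} :
  linear_op R L -> (forall a b, is_cderiv_on (fun s => Y s a b) (fun s => Y' s a b)) ->
  forall a b, is_cderiv_on (fun s => L (Y s) a b) (fun s => L (Y' s) a b).
Proof.
move=> linL dY a b.
have linLab : linear_form (fun y : A * B -> C => L (fun a b => y (a, b)) a b).
  by move=> al be X Z; rewrite (linL al be (fun a b => X (a, b)) (fun a b => Z (a, b))).
have decomp (Z : A -> B -> C) :
    L Z a b = \sum_p Z p.1 p.2 * L (fun a' b' => ((a', b') == p)%:R) a b.
  by have /= := linear_form_decomp _ (fun p => Z p.1 p.2) linLab.
apply: eq_is_cderiv_on (is_cderiv_on_sum _ _ _ (fun p =>
  is_cderiv_onM (dY p.1 p.2) (is_cderiv_on_cst (L (fun a' b' => ((a', b') == p)%:R) a b)))).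
  by move=> s; rewrite decomp.
by move=> t _; rewrite decomp; apply: eq_bigr => p _; rewrite mulr0 addr0.
Qed.

Lemma is_cderiv_on_embed {A J K : finType} (P : J -> K -> C) {z z' : R -> A -> K -> C} :
  (forall a k, is_cderiv_on (fun s => z s a k) (fun s => z' s a k)) ->
  forall a j, is_cderiv_on (fun s => embed P (z s) a j) (fun s => embed P (z' s) a j).
Proof.
move=> dz a j; apply: eq_is_cderiv_on (is_cderiv_on_sum _ _ _ (fun k =>
  is_cderiv_onM (dz a k) (is_cderiv_on_cst (P j k)))) => // t _.
by apply: eq_bigr => k _; rewrite mulr0 addr0.
Qed.

Lemma galerkin_energy_const {A J K : finType} (H : (A -> J -> C) -> A -> J -> C)
    (P : J -> K -> C) (Ch : R -> A -> K -> C) :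
  linear_op R H -> self_adjoint R H -> t0 < t1 ->
  solves R Ch (fun z => embed_adj P (fun a j => - 'i * H (embed P z) a j)) t0 t1 (Ch t0) ->
  energy R H (embed P (Ch t1)) = energy R H (embed P (Ch t0)).
Proof.
move=> linH adjH lt01 sol.
have dY := is_cderiv_on_embed P (solves_is_cderiv_on sol).
have dE := is_cderiv_on_inner dY (is_cderiv_on_linear_op linH dY).
apply: (is_cderiv_on0_eq (fun s => energy R H (embed P (Ch s))) lt01).
apply: eq_is_cderiv_on dE => // t _.
set Y := embed P (Ch t); set G := embed_adj P (fun a j => - 'i * H Y a j).
transitivity (inner R (embed P G) (H Y) + inner R Y (H (embed P G))); first by [].
rewrite -(adjH Y) -(conj_inner _ (H Y)) inner_embed.
have -> : G = (fun a k => - 'i * embed_adj P (H Y) a k).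
  apply: funext => a; apply: funext => k.
  by rewrite mulr_sumr; apply: eq_bigr => j _; rewrite mulrA.
exact: inner_mulNi_addJ.
Qed.

End ComplexCalculus.

Theorem theorem6p3 (R : realType) (d : nat) (n : nat -> nat) (tau : tree)
    (rk rkh : tree -> nat)
    (H : V R n rk tau -> V R n rk tau)
    (Y0 : TTN R n rk (rk tau) tau)
    (t0 t1 : R)
    (Y1 : TTN R n rkh (rk tau) tau) (Ch0 : ConnT R rkh (rk tau) tau) :
  is_tree_on d tau ->
  rk tau = 1%N ->
  linear_op R H ->
  self_adjoint R H ->
  ortho_below R n rk (rk tau) tau Y0 ->
  full_tree_rank R n rk (rk tau) tau Y0 ->
  t0 < t1 ->
  Integ R n rk rkh t0 t1 tau Y0 (fun Y a j => - 'i%C * H Y a j) Y1 Ch0 ->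
  energy R H (full R n rkh (rk tau) tau Y1) = energy R H (full R n rk (rk tau) tau Y0).
Proof.
move=> _ _ linH adjH _ frY0 lt01 integ.
have := Integ_spec integ; destruct tau as [l|ts]; first by [].
case: Y1 integ => Ch1 kidsh _ /(_ frY0) [_ reprY0 [Ch sol Ch1E]].
have [Ch0E _] := sol; have -> : Ch1 = Ch t1 := Ch1E.
set P := kron_basis ts kidsh.
have -> : full R n rk _ (Node ts) Y0 = embed P (Ch t0).
  by apply: funext => a; apply: funext => js; rewrite -reprY0 Ch0E full_node_kron.
rewrite full_node_kron; apply: galerkin_energy_const => //.
by move: sol; rewrite Galerkin_kron Ch0E.
Qed.
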